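(* Let $N\ge2$, $M\ge1$, $q_1,\dots,q_N>0$, and let each $J_k:\mathbb{R}^M\to\mathbb{R}$ be convex and differentiable, with $\sum_{k=1}^Nq_kJ_k$ strongly convex with unique minimizer $w^\star$, and suppose $\sum_{k=1}^NJ_k$ is strongly convex. Let $A$ be primitive, left-stochastic and balanced with Perron vector $p$, and let $\mu_1,\dots,\mu_N>0$ satisfy $q=\beta\,\mathrm{diag}\{\mu_1,\dots,\mu_N\}p$ for some $\beta>0$. Then there exists a unique pair $(\mathcal{W}^\star,\mathcal{Y}^\star_o)\in\mathbb{R}^{NM}\times\mathbb{R}^{NM}$ with $\mathcal{Y}^\star_o$ in the range of $\mathcal{V}$ such that $$\bar{\mathcal{A}}^{\mathsf T}\mathcal{M}\nabla\mathcal{J}^o(\mathcal{W}^\star)+\mathcal{P}^{-1}\mathcal{V}\mathcal{Y}^\star_o=0,\qquad \mathcal{V}\mathcal{W}^\star=0 .$$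
   Context: $A=[a_{\ell k}]\in\mathbb{R}^{N\times N}$ is nonnegative, left-stochastic ($A^{\mathsf T}\mathbf{1}_N=\mathbf{1}_N$) and primitive, with Perron vector $p$: $Ap=p$, $\mathbf{1}_N^{\mathsf T}p=1$, $p\succ0$; $P=\mathrm{diag}(p)$, balanced means $PA^{\mathsf T}=AP$. $q=(q_1,\dots,q_N)^{\mathsf T}$, $\bar A=(I_N+A)/2$. The symmetric positive semidefinite matrix $(P-AP)/2$ has eigendecomposition $U\Sigma U^{\mathsf T}$ and $V=U\Sigma^{1/2}U^{\mathsf T}$. $\bar{\mathcal{A}}=\bar A\otimes I_M$, $\mathcal{P}=P\otimes I_M$, $\mathcal{V}=V\otimes I_M$, $\mathcal{M}=\mathrm{diag}\{\mu_1I_M,\dots,\mu_NI_M\}$, and $\nabla\mathcal{J}^o(\mathcal{W})=\mathrm{col}\{\nabla J_1(w_1),\dots,\nabla J_N(w_N)\}$ for $\mathcal{W}=\mathrm{col}\{w_1,\dots,w_N\}$. *)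

From HB Require Import structures.
From mathcomp Require Import all_boot all_order all_algebra.
From mathcomp Require Import all_classical all_reals all_analysis.
Set Implicit Arguments. Unset Strict Implicit. Unset Printing Implicit Defensive.
Import Order.TTheory GRing.Theory Num.Theory.
Import numFieldNormedType.Exports.
Local Open Scope ring_scope.

Definition sqnorm (R : realType) (M : nat) (x : 'rV[R]_M) : R :=
  \sum_(i < M) x 0 i ^+ 2.

Definition convex_fun (R : realType) (M : nat) (J : 'rV[R]_M -> R) : Prop :=
  forall (x y : 'rV[R]_M) (t : R), 0 <= t -> t <= 1 ->
    J (t *: x + (1 - t) *: y) <= t * J x + (1 - t) * J y.

Definition strongly_convex (R : realType) (M : nat) (J : 'rV[R]_M -> R) : Prop :=
  exists nu : R, 0 < nu /\
  forall (x y : 'rV[R]_M) (t : R), 0 <= t -> t <= 1 ->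
    J (t *: x + (1 - t) *: y) <=
      t * J x + (1 - t) * J y - nu / 2 * t * (1 - t) * sqnorm (x - y).

Definition grad (R : realType) (M : nat) (J : 'rV[R]_M -> R) (w : 'rV[R]_M)
  : 'rV[R]_M := \row_(i < M) ('d J w) (delta_mx 0 i).

Definition mxpow (R : realType) (N : nat) (A : 'M[R]_N) (k : nat) : 'M[R]_N :=
  iter k (mulmx A) 1%:M.

Definition nonneg_mx (R : realType) (N : nat) (A : 'M[R]_N) : Prop :=
  forall i j, 0 <= A i j.

Definition left_stochastic (R : realType) (N : nat) (A : 'M[R]_N) : Prop :=
  nonneg_mx A /\ A^T *m const_mx 1 = (const_mx 1 : 'cV[R]_N).

Definition primitive_mx (R : realType) (N : nat) (A : 'M[R]_N) : Prop :=
  nonneg_mx A /\ exists k : nat, forall i j, 0 < mxpow A k i j.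

Definition perron_vector (R : realType) (N : nat) (A : 'M[R]_N) (p : 'cV[R]_N)
  : Prop :=
  A *m p = p /\ \sum_(i < N) p i 0 = 1 /\ forall i, 0 < p i 0.

Definition Pmat (R : realType) (N : nat) (p : 'cV[R]_N) : 'M[R]_N := diag_mx p^T.

Definition balanced (R : realType) (N : nat) (A : 'M[R]_N) (p : 'cV[R]_N) : Prop :=
  Pmat p *m A^T = A *m Pmat p.

Definition Abar (R : realType) (N : nat) (A : 'M[R]_N) : 'M[R]_N :=
  2^-1 *: (1%:M + A).

(* Stacked vectors col{w_1,...,w_N} of R^{NM} are represented as N x M matrices
   whose k-th row is w_k.  Under this identification, (X (x) I_M) W is X *m W. *)

Definition gradJo (R : realType) (N M : nat) (J : 'I_N -> 'rV[R]_M -> R)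
  (W : 'M[R]_(N, M)) : 'M[R]_(N, M) :=
  \matrix_(k < N, i < M) grad (J k) (row k W) 0 i.

From HB Require Import structures.
From mathcomp Require Import all_boot all_order all_algebra.
From mathcomp Require Import all_classical all_reals all_analysis.
From mathcomp Require Import lra.
Import Order.TTheory GRing.Theory Num.Theory.
Import numFieldNormedType.Exports.
Set Implicit Arguments. Unset Strict Implicit. Unset Printing Implicit Defensive.
Local Open Scope ring_scope.

(* Let S := (P - A P)/2 = V^2.  Since A is primitive, its fixed vectors are the
   multiples of p, so the kernels of S and V consist of the consensus matrices
   1 w.  Left multiplication by 1^T P kills the term P^-1 V Y (because 1^T V = 0)
   and, A being balanced and left-stochastic, turns the gradient term into
   beta^-1 sum_k q_k grad J_k(w); hence W* = 1 w* with w* the minimiser of the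
   convex function sum_k q_k J_k.  The remaining equation V^2 Z = -P (gradient
   term) is solvable because its right-hand side has zero column sums, i.e. is
   orthogonal to ker S, and it determines Y = V Z since ker V^2 = ker V. *)

Section FirstOrderOptimality.
Variables (R : realType) (M : nat).
Implicit Types (f : 'rV[R]_M -> R) (w y v : 'rV[R]_M) (c : R).

Lemma derive_le_quotient f w v c : derivable f w v ->
  (forall t : R, 0 < t -> t <= 1 -> t^-1 * (f (t *: v + w) - f w) <= c) ->
  'D_v f w <= c.
Proof.
move=> df le_c; apply: cvgr_to_le (cvg_dnbhs_at_right df) _.
near=> t; apply: le_c; near: t; [exact: nbhs_right_gt | exact: nbhs_right_le].
Unshelve. all: by end_near.
Qed.

Lemma derive_ge_quotient f w v c : derivable f w v ->
  (forall t : R, 0 < t -> t <= 1 -> c <= t^-1 * (f (t *: v + w) - f w)) ->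
  c <= 'D_v f w.
Proof.
move=> df ge_c; apply: cvgr_to_ge (cvg_dnbhs_at_right df) _.
near=> t; apply: ge_c; near: t; [exact: nbhs_right_gt | exact: nbhs_right_le].
Unshelve. all: by end_near.
Qed.

Lemma diff_grad f w v : 'd f w v = \sum_(i < M) v 0 i * grad f w 0 i.
Proof.
rewrite {1}(row_sum_delta v) linear_sum; apply: eq_bigr => i _.
by rewrite linearZ /= /grad mxE.
Qed.

Lemma grad_eq0_of_min f w : differentiable f w -> (forall y, f w <= f y) ->
  grad f w = 0.
Proof.
move=> df wmin; set g := grad f w.
have d_ge0 v : 0 <= 'd f w v.
  rewrite -deriveE //; apply: derive_ge_quotient; first exact: diff_derivable.
  move=> t t0 _; rewrite mulr_ge0 // ?invr_ge0 ?subr_ge0 //; exact: ltW.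
have sq_le0 : \sum_(i < M) g 0 i ^+ 2 <= 0.
  by rewrite -oppr_ge0 (le_trans (d_ge0 (- g))) // diff_grad -sumrN;
    apply: ler_sum => i _; rewrite mxE mulNr expr2.
have sq_eq0 : \sum_(i < M) g 0 i ^+ 2 = 0.
  by apply/eqP; rewrite eq_le sq_le0 sumr_ge0 // => i _; rewrite sqr_ge0.
apply/rowP => i; rewrite [RHS]mxE; apply/eqP; rewrite -sqrf_eq0; apply/eqP.
by apply: (psumr_eq0P _ sq_eq0) => // j _; rewrite sqr_ge0.
Qed.

Lemma convex_diff_le f w y : convex_fun f -> differentiable f w ->
  'd f w (y - w) <= f y - f w.
Proof.
move=> fcvx df; rewrite -deriveE //; apply: derive_le_quotient.
  exact: diff_derivable.
move=> t t0 t1; have := fcvx y w t (ltW t0) t1.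
have -> : t *: y + (1 - t) *: w = t *: (y - w) + w.
  by rewrite scalerBl scale1r scalerBr addrA addrAC.
move=> le_cvx; rewrite -(ler_pM2l t0) mulrA mulfV ?gt_eqF // mul1r.
lra.
Qed.

Lemma min_of_grad_eq0 f w : convex_fun f -> differentiable f w ->
  grad f w = 0 -> forall y, f w <= f y.
Proof.
move=> fcvx df g0 y; rewrite -subr_ge0; apply: le_trans (convex_diff_le y fcvx df).
by rewrite diff_grad g0 big1 // => i _; rewrite [X in _ * X]mxE mulr0.
Qed.

End FirstOrderOptimality.

Section WeightedSum.
Variables (R : realType) (M N : nat) (c : 'I_N -> R) (J : 'I_N -> 'rV[R]_M -> R).
Hypotheses (c_ge0 : forall k, 0 <= c k) (Jcvx : forall k, convex_fun (J k))
  (Jdiff : forall k w, differentiable (J k) w).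
Let F (w : 'rV[R]_M) := \sum_(k < N) c k * J k w.

Lemma weighted_sumE : F = \sum_(k < N) c k *: J k.
Proof. by apply/funext => w; rewrite /F fct_sumE. Qed.

Lemma differentiable_weighted_sum w : differentiable F w.
Proof.
by rewrite weighted_sumE; apply: differentiable_sum => k; exact: differentiableZ.
Qed.

Lemma grad_weighted_sum w : grad F w = \sum_(k < N) c k *: grad (J k) w.
Proof.
apply/rowP => i; rewrite /grad mxE -deriveE; last exact: differentiable_weighted_sum.
rewrite weighted_sumE derive_sum => [|k]; last exact/derivableZ/diff_derivable.
rewrite summxE; apply: eq_bigr => k _.
by rewrite deriveZ ?deriveE ?mxE //; exact: diff_derivable.
Qed.

Lemma convex_weighted_sum : convex_fun F.
Proof.
move=> x y t t0 t1; rewrite /F !mulr_sumr -big_split /=; apply: ler_sum => k _.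
by rewrite mulrCA [(1 - t) * _]mulrCA -mulrDr ler_wpM2l // Jcvx.
Qed.

Lemma weighted_sum_minP w :
  (forall y, \sum_(k < N) c k * J k w <= \sum_(k < N) c k * J k y) <->
  \sum_(k < N) c k *: grad (J k) w = 0.
Proof.
rewrite -grad_weighted_sum; split.
  exact/grad_eq0_of_min/differentiable_weighted_sum.
exact/min_of_grad_eq0/differentiable_weighted_sum/convex_weighted_sum.
Qed.

End WeightedSum.

Section PrimitiveFixedVectors.
Variables (R : realType) (N : nat).

Lemma positive_stochastic_fixed_eq0 (B : 'M[R]_N) (z : 'cV[R]_N) :
  (forall i j, 0 < B i j) -> const_mx 1 *m B = const_mx 1 :> 'rV_N ->
  B *m z = z -> \sum_i z i 0 = 0 -> z = 0.
Proof.
(* The positive part of z is sub-invariant with the same mass as its image, hence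
   invariant; as B > 0 it is then either 0 or positive everywhere. *)
move=> Bpos B1 Bz z0.
have Bcol j : \sum_i B i j = 1.
  have := congr1 (fun r : 'rV_N => r 0 j) B1; rewrite !mxE => <-.
  by apply: eq_bigr => i _; rewrite mxE mul1r.
pose zp i := Num.max (z i 0) 0.
have zp_ge0 i : 0 <= zp i by rewrite le_max lexx orbT.
have zp_le i : zp i <= \sum_j B i j * zp j.
  rewrite ge_max sumr_ge0 => [|j _]; last by rewrite mulr_ge0 // ltW.
  rewrite andbT -{1}Bz mxE; apply: ler_sum => j _.
  by apply: ler_wpM2l; [exact: ltW | rewrite le_max lexx].
have zp_fix i : zp i = \sum_j B i j * zp j.
  have sum_eq0 : \sum_i (\sum_j B i j * zp j - zp i) = 0.
    rewrite sumrB exchange_big /=; apply/eqP; rewrite subr_eq0; apply/eqP.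
    by apply: eq_bigr => j _; rewrite -mulr_suml Bcol mul1r.
  apply/esym/eqP; rewrite -subr_eq0; apply/eqP.
  by apply: (psumr_eq0P _ sum_eq0) => // l _; rewrite subr_ge0.
have z_le0 i : z i 0 <= 0.
  rewrite leNgt; apply/negP => zi_gt0.
  have z_gt0 j : 0 < z j 0.
    have : 0 < zp j.
      rewrite zp_fix (bigD1 i) //=; apply: ltr_pwDl.
        by rewrite mulr_gt0 // lt_max zi_gt0.
      by apply: sumr_ge0 => l _; rewrite mulr_ge0 // ltW.
    by rewrite lt_max ltxx orbF.
  move: z0; rewrite (bigD1 i) //=; apply/eqP; rewrite gt_eqF // ltr_pwDl //.
  by apply: sumr_ge0 => l _; exact: ltW.
have sumN_eq0 : \sum_i - z i 0 = 0 by rewrite sumrN z0 oppr0.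
apply/matrixP => i j; rewrite (ord1 j) mxE; apply/eqP; rewrite -oppr_eq0; apply/eqP.
by apply: (psumr_eq0P _ sumN_eq0) => // l _; rewrite oppr_ge0.
Qed.

Lemma mxpow_fixed (A : 'M[R]_N) (z : 'cV[R]_N) k :
  A *m z = z -> mxpow A k *m z = z.
Proof.
move=> Az; elim: k => [|k IH]; first by rewrite /mxpow /= mul1mx.
by rewrite [mxpow A k.+1]/mxpow iterS -mulmxA IH.
Qed.

Lemma ones_mxpow (A : 'M[R]_N) k : const_mx 1 *m A = const_mx 1 :> 'rV_N ->
  const_mx 1 *m mxpow A k = const_mx 1 :> 'rV_N.
Proof.
move=> A1; elim: k => [|k IH]; first by rewrite /mxpow /= mulmx1.
by rewrite [mxpow A k.+1]/mxpow iterS mulmxA A1 IH.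
Qed.

Lemma left_stochastic_ones (A : 'M[R]_N) :
  left_stochastic A -> const_mx 1 *m A = const_mx 1 :> 'rV_N.
Proof.
case=> _ A1; apply: trmx_inj.
by rewrite trmx_mul [X in _ *m X]trmx_const A1 trmx_const.
Qed.

Lemma primitive_fixed_vector (A : 'M[R]_N) (p y : 'cV[R]_N) :
  primitive_mx A -> left_stochastic A -> perron_vector A p ->
  A *m y = y -> y = (\sum_i y i 0) *: p.
Proof.
move=> [_ [k Apos]] /left_stochastic_ones A1 [Ap [p_sum _]] Ay.
apply/eqP; rewrite -subr_eq0; apply/eqP.
apply: (positive_stochastic_fixed_eq0 Apos (ones_mxpow k A1)).
  by rewrite mulmxBr -scalemxAr !mxpow_fixed.
under eq_bigr do rewrite !mxE.
by rewrite sumrB -mulr_sumr p_sum mulr1 subrr.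
Qed.

End PrimitiveFixedVectors.

Section DiagonalWeights.
Variables (R : realType) (N : nat) (p : 'cV[R]_N).

Lemma Pmat_mulE M (X : 'M[R]_(N, M)) i j : (Pmat p *m X) i j = p i 0 * X i j.
Proof. by rewrite /Pmat mul_diag_mx !mxE. Qed.

Lemma Pmat_ones : Pmat p *m const_mx 1 = p.
Proof. by apply/matrixP => i j; rewrite Pmat_mulE mxE mulr1 (ord1 j). Qed.

Lemma Pmat_unit : (forall i, 0 < p i 0) -> Pmat p \in unitmx.
Proof.
move=> p_gt0; rewrite unitmxE det_diag unitfE.
by apply/prodf_neq0 => i _; rewrite mxE gt_eqF.
Qed.

End DiagonalWeights.

Lemma row_ones_mul (R : realType) N M (w : 'rV[R]_M) (k : 'I_N) :
  row k (const_mx 1 *m w) = w.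
Proof. by apply/rowP => j; rewrite !mxE big_ord1 !mxE mul1r. Qed.

Definition Smx (R : realType) N (A : 'M[R]_N) (p : 'cV[R]_N) : 'M[R]_N :=
  2^-1 *: (Pmat p - A *m Pmat p).

Section SmxKernel.
Variables (R : realType) (N : nat) (A : 'M[R]_N) (p : 'cV[R]_N).
Hypotheses (Aprim : primitive_mx A) (Ast : left_stochastic A)
  (Ap : perron_vector A p).

Lemma Smx_ones M (w : 'rV[R]_M) : Smx A p *m (const_mx 1 *m w) = 0.
Proof.
rewrite /Smx -scalemxAl mulmxBl !mulmxA Pmat_ones.
by rewrite -[A *m Pmat p *m _]mulmxA Pmat_ones Ap.1 subrr scaler0.
Qed.

Lemma Smx_mul_eq0 M (X : 'M[R]_(N, M)) :
  Smx A p *m X = 0 -> exists w : 'rV_M, X = const_mx 1 *m w.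
Proof.
move=> SX; have [p_sum p_gt0] := Ap.2.
have [i _] : exists i : 'I_N, true && (0 < p i 0).
  apply: psumr_neq0P => [l _|]; first exact: ltW.
  by rewrite p_sum; apply/eqP; rewrite oner_neq0.
have PX : A *m (Pmat p *m X) = Pmat p *m X.
  move/eqP: SX; rewrite /Smx -scalemxAl scaler_eq0 invr_eq0 pnatr_eq0 /=.
  by rewrite mulmxBl subr_eq0 -mulmxA => /eqP.
have col_const j l : X l j = X i j.
  pose y := col j (Pmat p *m X).
  have y_fixed : A *m y = y by rewrite /y !colE mulmxA PX.
  have y_entry m : X m j = \sum_k y k 0.
    have := primitive_fixed_vector Aprim Ast Ap y_fixed.
    move/(congr1 (fun z : 'cV_N => z m 0)).
    rewrite /= [in X in X = _]mxE Pmat_mulE mxE [_ * p m 0]mulrC => /mulfI; apply.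
    by rewrite gt_eqF.
  by rewrite !y_entry.
exists (row i X); apply/matrixP => l j.
by rewrite mxE big_ord1 !mxE mul1r col_const.
Qed.

End SmxKernel.

Lemma gram_mx_eq0 (R : realFieldType) N M (Y : 'M[R]_(N, M)) :
  Y^T *m Y = 0 -> Y = 0.
Proof.
move=> YtY; apply/matrixP => i j; rewrite [RHS]mxE; apply/eqP; rewrite -sqrf_eq0.
have := congr1 (fun m : 'M[R]_M => m j j) YtY; rewrite !mxE => /eqP.
rewrite psumr_eq0 => [/allP/(_ i (mem_index_enum i))|k _]; rewrite mxE -expr2 //.
exact: sqr_ge0.
Qed.

Lemma symmx_mul_sqr_eq0 (R : realFieldType) N M (V : 'M[R]_N)
  (X : 'M[R]_(N, M)) : V^T = V -> V *m (V *m X) = 0 -> V *m X = 0.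
Proof.
by move=> Vsym VVX; apply: gram_mx_eq0; rewrite trmx_mul Vsym -mulmxA VVX mulmx0.
Qed.

Section SpectralSquareRoot.
Variables (R : realType) (N : nat) (S U V : 'M[R]_N) (sigma : 'rV[R]_N).
Hypotheses (U_orth : U^T *m U = 1%:M) (sigma_ge0 : forall i, 0 <= sigma 0 i)
  (S_eig : S = U *m diag_mx sigma *m U^T)
  (V_def : V = U *m diag_mx (map_mx Num.sqrt sigma) *m U^T).

Lemma sqrtmx_sym : V^T = V.
Proof. by rewrite V_def !trmx_mul trmxK tr_diag_mx mulmxA. Qed.

Lemma sqrtmx_sqr : V *m V = S.
Proof.
rewrite S_eig V_def !mulmxA -[U *m _ *m U^T *m U]mulmxA U_orth mulmx1.
rewrite -[U *m _ *m _]mulmxA mulmx_diag; congr (_ *m _ *m _); congr diag_mx.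
by apply/rowP => i; rewrite !mxE -expr2 sqr_sqrtr.
Qed.

Lemma sqrtmx_mul_eq0 M (X : 'M[R]_(N, M)) : V *m X = 0 <-> S *m X = 0.
Proof.
rewrite -sqrtmx_sqr -mulmxA; split => [-> | VVX]; first by rewrite mulmx0.
exact: symmx_mul_sqr_eq0 sqrtmx_sym VVX.
Qed.

Lemma sqrtmx_sqr_inj M (Z Z' : 'M[R]_(N, M)) :
  V *m (V *m Z) = V *m (V *m Z') -> V *m Z = V *m Z'.
Proof.
move=> E; apply/eqP; rewrite -subr_eq0 -mulmxBr; apply/eqP.
by apply: symmx_mul_sqr_eq0 sqrtmx_sym _; rewrite !mulmxBr E subrr.
Qed.

Lemma spectral_range M (b : 'M[R]_(N, M)) :
  (forall u : 'cV_N, S *m u = 0 -> u^T *m b = 0) -> exists Z, V *m (V *m Z) = b.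
Proof.
(* Pseudo-inverse: b has no component along the eigenvectors of eigenvalue 0. *)
move=> b_orth; exists (U *m diag_mx (map_mx GRing.inv sigma) *m U^T *m b).
rewrite mulmxA sqrtmx_sqr S_eig !mulmxA -[U *m _ *m U^T *m U]mulmxA U_orth mulmx1.
rewrite -[U *m _ *m _]mulmxA mulmx_diag -!mulmxA.
suff -> : diag_mx (\row_j (sigma 0 j * map_mx GRing.inv sigma 0 j)) *m (U^T *m b)
    = U^T *m b by rewrite mulmxA mulmx1C // mul1mx.
apply/matrixP => i j; rewrite mul_diag_mx !mxE.
have [s0|s_neq0] := eqVneq (sigma 0 i) 0; last by rewrite mulfV // mul1r.
have Su : S *m col i U = 0.
  rewrite S_eig colE -!mulmxA [U^T *m (U *m _)]mulmxA U_orth mul1mx.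
  rewrite [X in U *m X](_ : _ = 0) ?mulmx0 //.
  apply/matrixP => k l; rewrite mul_diag_mx !mxE.
  by have [->|] := eqVneq k i; rewrite ?s0 ?mul0r // mulr0.
rewrite s0 !mul0r; have := congr1 (fun m : 'rV[R]_M => m 0 j) (b_orth _ Su).
by rewrite !mxE => u_b; rewrite -[LHS]u_b; apply: eq_bigr => k _; rewrite !mxE.
Qed.

End SpectralSquareRoot.

Lemma ones_Abar (R : realType) N (A : 'M[R]_N) :
  const_mx 1 *m A = const_mx 1 :> 'rV_N ->
  const_mx 1 *m Abar A = const_mx 1 :> 'rV_N.
Proof.
move=> A1; rewrite /Abar -scalemxAr mulmxDr mulmx1 A1 -mulr2n -scalerMnr scalerMnl.
by rewrite -mulr_natr mulVf ?scale1r // pnatr_eq0.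
Qed.

Lemma balanced_ones_mul (R : realType) N M (A : 'M[R]_N) (p mu : 'cV[R]_N)
  (G : 'M[R]_(N, M)) : left_stochastic A -> balanced A p ->
  const_mx 1 *m (Pmat p *m ((Abar A)^T *m (diag_mx mu^T *m G)))
    = (diag_mx mu^T *m p)^T *m G.
Proof.
move=> /left_stochastic_ones A1 Abal.
have PAbar : Pmat p *m (Abar A)^T = Abar A *m Pmat p.
  rewrite /Abar linearZ /= linearD /= trmx1 -!scalemxAr -scalemxAl.
  by rewrite mulmxDr mulmx1 Abal mulmxDl mul1mx.
rewrite [Pmat p *m _]mulmxA PAbar -mulmxA mulmxA ones_Abar //.
apply/matrixP => i j; rewrite (ord1 i) !mxE; apply: eq_bigr => k _.
by rewrite Pmat_mulE !mul_diag_mx !mxE mul1r mulrA [p k 0 * _]mulrC.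
Qed.

Lemma gradJo_ones (R : realType) N M (J : 'I_N -> 'rV[R]_M -> R)
  (c : 'cV[R]_N) (w : 'rV[R]_M) :
  c^T *m gradJo J (const_mx 1 *m w) = \sum_k c k 0 *: grad (J k) w.
Proof.
apply/rowP => j; rewrite !mxE summxE; apply: eq_bigr => k _.
by rewrite !mxE row_ones_mul.
Qed.

Definition gradient_term (R : realType) N M (A : 'M[R]_N) (mu : 'cV[R]_N)
  (J : 'I_N -> 'rV[R]_M -> R) (W : 'M[R]_(N, M)) : 'M[R]_(N, M) :=
  (Abar A)^T *m (diag_mx mu^T *m gradJo J W).

Section SaddlePoint.
Variables (R : realType) (N M : nat) (q : 'cV[R]_N) (J : 'I_N -> 'rV[R]_M -> R)
  (A : 'M[R]_N) (p mu : 'cV[R]_N) (beta : R) (U V : 'M[R]_N) (sigma : 'rV[R]_N).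
Hypotheses (q_gt0 : forall k, 0 < q k 0) (Jcvx : forall k, convex_fun (J k))
  (Jdiff : forall k w, differentiable (J k) w)
  (Aprim : primitive_mx A) (Ast : left_stochastic A) (Ap : perron_vector A p)
  (Abal : balanced A p) (beta_gt0 : 0 < beta)
  (qE : q = beta *: (diag_mx mu^T *m p))
  (U_orth : U^T *m U = 1%:M) (sigma_ge0 : forall i, 0 <= sigma 0 i)
  (S_eig : Smx A p = U *m diag_mx sigma *m U^T)
  (V_def : V = U *m diag_mx (map_mx Num.sqrt sigma) *m U^T).

Let T := gradient_term A mu J.
Let P_unit : Pmat p \in unitmx := Pmat_unit Ap.2.2.

Lemma mulV_eq0P M' (X : 'M[R]_(N, M')) :
  V *m X = 0 <-> exists w : 'rV_M', X = const_mx 1 *m w.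
Proof.
rewrite (sqrtmx_mul_eq0 U_orth sigma_ge0 S_eig V_def); split.
  exact: Smx_mul_eq0.
by case=> w ->; exact: Smx_ones.
Qed.

Lemma ones_mulV : const_mx 1 *m V = 0 :> 'rV_N.
Proof.
apply: trmx_inj; rewrite trmx_mul (sqrtmx_sym V_def) trmx_const trmx0.
apply/mulV_eq0P; exists (const_mx 1).
by apply/matrixP => i j; rewrite !mxE big_ord1 !mxE mulr1.
Qed.

Lemma consensus_gradE w :
  beta *: (const_mx 1 *m (Pmat p *m T (const_mx 1 *m w)) : 'rV_M)
  = \sum_k q k 0 *: grad (J k) w.
Proof. by rewrite balanced_ones_mul // scalemxAl -linearZ /= -qE gradJo_ones. Qed.

Lemma saddle_exists w :
  (forall y, \sum_k q k 0 * J k w <= \sum_k q k 0 * J k y) ->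
  exists Z, T (const_mx 1 *m w) + invmx (Pmat p) *m (V *m (V *m Z)) = 0.
Proof.
move=> w_min.
have opt := (weighted_sum_minP (fun k => ltW (q_gt0 k)) Jcvx Jdiff w).1 w_min.
have ones_PT : const_mx 1 *m (Pmat p *m T (const_mx 1 *m w)) = 0 :> 'rV_M.
  have := consensus_gradE w; rewrite opt => /eqP.
  by rewrite scaler_eq0 gt_eqF //= => /eqP.
have [Z VVZ] : exists Z, V *m (V *m Z) = - (Pmat p *m T (const_mx 1 *m w)).
  apply: (spectral_range U_orth sigma_ge0 S_eig V_def).
  move=> u /(Smx_mul_eq0 Aprim Ast Ap)[c ->].
  by rewrite trmx_mul trmx_const -mulmxA mulmxN ones_PT oppr0 mulmx0.
by exists Z; rewrite VVZ mulmxN mulKmx ?subrr.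
Qed.

Lemma saddle_consensus W Y :
  T W + invmx (Pmat p) *m (V *m Y) = 0 -> V *m W = 0 ->
  exists2 w, W = const_mx 1 *m w &
    forall y, \sum_k q k 0 * J k w <= \sum_k q k 0 * J k y.
Proof.
move=> EY /mulV_eq0P[w EW]; exists w => //.
apply/(weighted_sum_minP (fun k => ltW (q_gt0 k)) Jcvx Jdiff).
rewrite -consensus_gradE -EW.
have := congr1 (fun X => const_mx 1 *m (Pmat p *m X) : 'rV_M) EY.
rewrite /= !mulmxDr mulKVmx // [const_mx 1 *m (V *m _)]mulmxA ones_mulV.
rewrite mul0mx addr0.
by rewrite !mulmx0 => ->; rewrite scaler0.
Qed.

Lemma saddle_multiplier_unique W Z Z' :
  T W + invmx (Pmat p) *m (V *m (V *m Z)) = 0 ->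
  T W + invmx (Pmat p) *m (V *m (V *m Z')) = 0 -> V *m Z = V *m Z'.
Proof.
move=> E E'; apply: (sqrtmx_sqr_inj V_def).
by move: E; rewrite -E' => /addrI /(congr1 (mulmx (Pmat p))); rewrite !mulKVmx.
Qed.

End SaddlePoint.

Theorem lemma3 (R : realType) (N M : nat)
  (q : 'cV[R]_N) (J : 'I_N -> 'rV[R]_M -> R)
  (A : 'M[R]_N) (p : 'cV[R]_N) (mu : 'cV[R]_N) (beta : R)
  (U : 'M[R]_N) (sigma : 'rV[R]_N) (V : 'M[R]_N) :
  (2 <= N)%N -> (1 <= M)%N ->
  (forall k, 0 < q k 0) ->
  (forall k, convex_fun (J k)) ->
  (forall k w, differentiable (J k) w) ->
  strongly_convex (fun w => \sum_(k < N) q k 0 * J k w) ->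
  (exists wstar : 'rV[R]_M,
      (forall w, \sum_(k < N) q k 0 * J k wstar <= \sum_(k < N) q k 0 * J k w) /\
      (forall w', (forall w, \sum_(k < N) q k 0 * J k w' <= \sum_(k < N) q k 0 * J k w)
                  -> w' = wstar)) ->
  strongly_convex (fun w => \sum_(k < N) J k w) ->
  primitive_mx A -> left_stochastic A -> perron_vector A p -> balanced A p ->
  (forall k, 0 < mu k 0) -> 0 < beta ->
  q = beta *: (diag_mx mu^T *m p) ->
  (* eigendecomposition (P - A P)/2 = U Sigma U^T, V = U Sigma^{1/2} U^T *)
  U^T *m U = 1%:M ->
  (forall i, 0 <= sigma 0 i) ->
  2^-1 *: (Pmat p - A *m Pmat p) = U *m diag_mx sigma *m U^T ->
  V = U *m diag_mx (map_mx Num.sqrt sigma) *m U^T ->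
  exists W : 'M[R]_(N, M), exists Y : 'M[R]_(N, M),
    ((exists Z : 'M[R]_(N, M), Y = V *m Z) /\
     (Abar A)^T *m (diag_mx mu^T *m gradJo J W) + invmx (Pmat p) *m (V *m Y) = 0 /\
     V *m W = 0) /\
    forall W' Y' : 'M[R]_(N, M),
      (exists Z : 'M[R]_(N, M), Y' = V *m Z) ->
      (Abar A)^T *m (diag_mx mu^T *m gradJo J W') + invmx (Pmat p) *m (V *m Y') = 0 ->
      V *m W' = 0 ->
      W' = W /\ Y' = Y.
Proof.
(* Strong convexity only serves to produce the unique minimiser w*, which is
   assumed outright. *)
move=> _ _ q_gt0 Jcvx Jdiff _ [ws [ws_min ws_uniq]] _ Aprim Ast Ap Abal _ beta_gt0 qE
  U_orth sigma_ge0 S_eig V_def.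
have mulV_eq0 := mulV_eq0P Aprim Ast Ap U_orth sigma_ge0 S_eig V_def.
have [Z0 E0] := saddle_exists q_gt0 Jcvx Jdiff Aprim Ast Ap Abal beta_gt0 qE
  U_orth sigma_ge0 S_eig V_def ws_min.
exists (const_mx 1 *m ws), (V *m Z0); split.
  by split; [exists Z0 | split=> //; apply/mulV_eq0; exists ws].
move=> W Y [Z ->] E VW.
have [w EW w_min] := saddle_consensus q_gt0 Jcvx Jdiff Aprim Ast Ap Abal qE
  U_orth sigma_ge0 S_eig V_def E VW.
move: E; rewrite EW (ws_uniq w w_min) => E; split=> //.
exact: (saddle_multiplier_unique (mu := mu) (J := J) Ap V_def E E0).
Qed.
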